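(* Let $\alpha,\beta>0$, $n\ge4$, and let $3\le j_1<\dots<j_r\le n-2$. For $1\le j\le n-2$ let $x_j$ be the event that box $(n-j-1,j)$ (on the third main diagonal) is non-empty. Then \[\mathbb{P}_{n,\alpha,\beta}(x_{j_1},\dots,x_{j_r},0_{n-1,1},\beta_{n,1})=\mathbb{P}_{n,\alpha,\beta}(x_{j_1},\dots,x_{j_r},\beta_{n-1,2}),\] where $0_{n-1,1}$ is the event that box $(n-1,1)$ is empty, $\beta_{n,1}$ the event that box $(n,1)$ contains $\beta$, and $\beta_{n-1,2}$ the event that box $(n-1,2)$ contains $\beta$.
   Context: A staircase tableau of size $n$ has boxes $(i,j)$ with $i,j\ge1$ and $i+j\le n+1$, rows numbered from the top and columns from the left. An $\alpha/\beta$-staircase tableau of size $n$ is a filling in which each box is empty or contains $\alpha$ or $\beta$, such that: all boxes in the same column and above an $\alpha$ are empty; all boxes in the same row and to the left of a $\beta$ are empty; every main-diagonal box (with $i+j=n+1$) contains a symbol. $\overline{\mathcal{S}}_n$ is the set of these. The weight is $wt(S)=\alpha^{N_\alpha}\beta^{N_\beta}$ ($N_\alpha,N_\beta$ the numbers of $\alpha$'s, $\beta$'s), and $\mathbb{P}_{n,\alpha,\beta}(S)=wt(S)/\sum_{T\in\overline{\mathcal{S}}_n}wt(T)$. $\mathbb{P}_{n,\alpha,\beta}(E_1,\dots,E_m)$ denotes the probability of the intersection of the events. *)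

From mathcomp Require Import all_boot all_order all_algebra.
Set Implicit Arguments. Unset Strict Implicit. Unset Printing Implicit Defensive.
Import Order.TTheory GRing.Theory Num.Theory.

(* Contents of a box: None = empty, Some true = alpha, Some false = beta. *)
Definition cell := option bool.
Definition c_alpha : cell := Some true.
Definition c_beta : cell := Some false.

(* A filling of size n: boxes are indexed 1-based by (i, j) in 'I_n.+1 * 'I_n.+1;
   row/column index 0 and positions with i + j > n + 1 lie outside the staircase
   and are required to be empty (so each staircase filling has a unique code). *)
Definition filling (n : nat) := {ffun 'I_n.+1 * 'I_n.+1 -> cell}.

Definition in_stair (n : nat) (b : 'I_n.+1 * 'I_n.+1) : bool :=
  [&& 0 < b.1, 0 < b.2 & b.1 + b.2 <= n.+1]%N.

Definition ab_staircase (n : nat) (S : filling n) : bool :=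
  [&& [forall b, ~~ in_stair b ==> (S b == None)],
      [forall i : 'I_n.+1, forall j : 'I_n.+1, forall i' : 'I_n.+1,
         ((S (i, j) == c_alpha) && (i' < i)%N) ==> (S (i', j) == None)],
      [forall i : 'I_n.+1, forall j : 'I_n.+1, forall j' : 'I_n.+1,
         ((S (i, j) == c_beta) && (j' < j)%N) ==> (S (i, j') == None)] &
      [forall b, (in_stair b && (b.1 + b.2 == n.+1)%N) ==> (S b != None)]].

Definition box (n : nat) (S : filling n) (i j : nat) : cell :=
  if (i <= n) && (j <= n) then S (inord i, inord j) else None.

Definition N_alpha n (S : filling n) : nat := #|[pred b | S b == c_alpha]|.
Definition N_beta n (S : filling n) : nat := #|[pred b | S b == c_beta]|.

Local Open Scope ring_scope.

Definition wt (R : pzRingType) (a b : R) n (S : filling n) : R :=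
  a ^+ N_alpha S * b ^+ N_beta S.

Definition Prob (R : fieldType) (n : nat) (a b : R) (E : pred (filling n)) : R :=
  (\sum_(S : filling n | ab_staircase S && E S) wt a b S) /
  (\sum_(S : filling n | ab_staircase S) wt a b S).

Definition ev_x (n : nat) (j : nat) : pred (filling n) :=
  fun S => box S (n - j - 1) j != None.
Arguments ev_x : clear implicits.
Definition ev_empty n (i j : nat) : pred (filling n) := fun S => box S i j == None.
Arguments ev_empty : clear implicits.
Definition ev_beta n (i j : nat) : pred (filling n) := fun S => box S i j == c_beta.
Arguments ev_beta : clear implicits.
Definition ev_all_x n (js : seq nat) : pred (filling n) :=
  fun S => all (fun j => ev_x n j S) js.
Arguments ev_all_x : clear implicits.

From mathcomp Require Import all_boot all_order all_algebra.
From mathcomp Require Import zify.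
Import Order.TTheory GRing.Theory Num.Theory.
Set Implicit Arguments. Unset Strict Implicit. Unset Printing Implicit Defensive.

(* Both events are split according to the content of a main-diagonal corner
   box: (n-1,2) for the first event, (n,1) for the second.  When that box holds
   beta, both parts are the event "(n,1) and (n-1,2) both hold beta" (the box
   (n-1,1) is then forced empty).  When it holds alpha, the two parts are
   exchanged, weight-preservingly, by the involution of the staircase swapping
   columns 1 and 2 in rows 1..n-2 and swapping the boxes (n,1) and (n-1,2): the
   alpha in (n-1,2) empties column 2 above it, the alpha in (n,1) empties
   column 1 above it, so the swap respects the alpha and beta rules.  The
   boxes of the third diagonal in columns >= 3 are not moved. *)

Definition in_staircase n i j := [&& 0 < i, 0 < j & i + j <= n.+1].

Definition is_tableau n (f : nat -> nat -> cell) : Prop :=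
  [/\ forall i j, ~~ in_staircase n i j -> f i j = None,
      forall i j i', f i j = c_alpha -> i' < i -> f i' j = None,
      forall i j j', f i j = c_beta -> j' < j -> f i j' = None &
      forall i j, in_staircase n i j -> i + j = n.+1 -> f i j <> None].

Lemma eq_is_tableau n f g : f =2 g -> is_tableau n f -> is_tableau n g.
Proof.
move=> fg [out above left diag]; split=> [i j | i j i' | i j j' | i j]; rewrite -!fg.
- exact: out.
- exact: above.
- exact: left.
- exact: diag.
Qed.

Section TableauRules.
Variables (n : nat) (f : nat -> nat -> cell).
Hypothesis tab_f : is_tableau n f.

Lemma tableau_outside i j : i = 0 \/ j = 0 \/ n.+1 < i + j -> f i j = None.
Proof. by case: tab_f => out _ _ _ ij; apply: out; apply/and3P; case; lia. Qed.

Lemma tableau_above_alpha i j i' j' :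
  f i j = c_alpha -> i' < i -> j' = j -> f i' j' = None.
Proof. by case: tab_f => _ above _ _ fij lt_i' ->; apply: above fij lt_i'. Qed.

Lemma tableau_left_of_beta i j i' j' :
  f i j = c_beta -> j' < j -> i' = i -> f i' j' = None.
Proof. by case: tab_f => _ _ left _ fij lt_j' ->; apply: left fij lt_j'. Qed.

Lemma tableau_diag i j : 0 < i -> 0 < j -> i + j = n.+1 -> f i j <> None.
Proof. by case: tab_f => _ _ _ diag *; apply: diag; rewrite // /in_staircase; lia. Qed.

End TableauRules.

Lemma box_ord n (S : filling n) (b : 'I_n.+1 * 'I_n.+1) : box S b.1 b.2 = S b.
Proof. by case: b => i j; rewrite /box !leq_ord /= !inord_val. Qed.

Lemma box_inord n (S : filling n) i j :
  i <= n -> j <= n -> box S i j = S (inord i, inord j).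
Proof. by rewrite /box => -> ->. Qed.

Lemma box_outside n (S : filling n) i j : n < i \/ n < j -> box S i j = None.
Proof. by rewrite /box; case: ifP => //; lia. Qed.

Lemma ab_staircase_box n (S : filling n) : ab_staircase S <-> is_tableau n (box S).
Proof.
split.
- case/and4P=> /forallP out /forallP above /forallP left /forallP diag.
  have box_le i j c : box S i j = Some c -> i <= n /\ j <= n.
    by rewrite /box; case: ifP => // /andP.
  split.
  + move=> i j ij_out.
    have [[i_le j_le]|big] : i <= n /\ j <= n \/ (n < i \/ n < j) by lia.
      by rewrite box_inord //; apply/eqP/(implyP (out _)); rewrite /in_stair /= !inordK.
    exact: box_outside.
  + move=> i j i' fij lt_i'; have [i_le j_le] := box_le _ _ _ fij.
    rewrite box_inord // in fij; rewrite box_inord; try lia.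
    apply/eqP/(implyP (forallP (forallP (above (inord i)) (inord j)) (inord i'))).
    by rewrite fij eqxx !inordK //; lia.
  + move=> i j j' fij lt_j'; have [i_le j_le] := box_le _ _ _ fij.
    rewrite box_inord // in fij; rewrite box_inord; try lia.
    apply/eqP/(implyP (forallP (forallP (left (inord i)) (inord j)) (inord j'))).
    by rewrite fij eqxx !inordK //; lia.
  + move=> i j /and3P[i_gt0 j_gt0 _] diag_ij; rewrite box_inord; try lia.
    apply/eqP/(implyP (diag _)).
    by rewrite /in_stair /= !inordK -?diag_ij ?eqxx ?andbT //; lia.
- case=> out above left diag; apply/and4P; split; apply/forallP.
  + by move=> b; apply/implyP => b_out; rewrite -box_ord; apply/eqP/out.
  + move=> i; apply/forallP=> j; apply/forallP=> i'.
    apply/implyP=> /andP[/eqP fij lt_i']; rewrite -(box_ord S (i', j)).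
    by apply/eqP/(above i j) => //; rewrite (box_ord S (i, j)).
  + move=> i; apply/forallP=> j; apply/forallP=> j'.
    apply/implyP=> /andP[/eqP fij lt_j']; rewrite -(box_ord S (i, j')).
    by apply/eqP/(left i j) => //; rewrite (box_ord S (i, j)).
  + by move=> b; apply/implyP => /andP[b_in /eqP b_diag]; rewrite -box_ord; apply/eqP/diag.
Qed.

Section ColumnSwap.
Variable n : nat.
Hypothesis n_ge2 : 2 <= n.

Definition swap12 (i j : nat) : nat * nat :=
  if (i <= n - 2) && (j == 1) then (i, 2)
  else if (i <= n - 2) && (j == 2) then (i, 1)
  else if (i == n) && (j == 1) then (n - 1, 2)
  else if (i == n - 1) && (j == 2) then (n, 1)
  else (i, j).

Ltac swap12_cases := rewrite /swap12; repeat (case: ifP => ? /=).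

Lemma swap12K i j : swap12 (swap12 i j).1 (swap12 i j).2 = (i, j).
Proof.
rewrite [swap12 i j]/swap12; repeat (case: ifP => ? /=);
  by swap12_cases; apply/pair_equal_spec; lia.
Qed.

Lemma swap12_id i j : j != 1 -> j != 2 -> swap12 i j = (i, j).
Proof. by move=> /negbTE j1 /negbTE j2; rewrite /swap12 j1 j2 !andbF. Qed.

Lemma swap12_n1_1 : swap12 (n - 1) 1 = (n - 1, 1).
Proof. by swap12_cases; try apply/pair_equal_spec; lia. Qed.

Lemma swap12_n_1 : swap12 n 1 = (n - 1, 2).
Proof. by swap12_cases; try apply/pair_equal_spec; lia. Qed.

Lemma swap12_n1_2 : swap12 (n - 1) 2 = (n, 1).
Proof. by swap12_cases; try apply/pair_equal_spec; lia. Qed.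

Lemma swap12_le i j :
  ((swap12 i j).1 <= n) && ((swap12 i j).2 <= n) = (i <= n) && (j <= n).
Proof. by swap12_cases; apply/idP/idP; lia. Qed.

Lemma swap12_in_staircase i j :
  in_staircase n (swap12 i j).1 (swap12 i j).2 = in_staircase n i j.
Proof. by rewrite /in_staircase; swap12_cases; apply/idP/idP; lia. Qed.

Lemma swap12_diag i j :
  ((swap12 i j).1 + (swap12 i j).2 == n.+1) = (i + j == n.+1).
Proof. by swap12_cases; apply/idP/idP; lia. Qed.

Definition swap_box (b : 'I_n.+1 * 'I_n.+1) : 'I_n.+1 * 'I_n.+1 :=
  (inord (swap12 b.1 b.2).1, inord (swap12 b.1 b.2).2).

Lemma swap_boxK : involutive swap_box.
Proof.
case=> i j; rewrite /swap_box /=.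
have /andP[i_le j_le] : ((swap12 i j).1 <= n) && ((swap12 i j).2 <= n).
  by rewrite swap12_le !leq_ord.
by rewrite !inordK ?ltnS // swap12K /= !inord_val.
Qed.

Definition swap_filling (S : filling n) : filling n := [ffun b => S (swap_box b)].

Lemma swap_fillingK : involutive swap_filling.
Proof. by move=> S; apply/ffunP => b; rewrite !ffunE swap_boxK. Qed.

Lemma box_swap_filling S i j :
  box (swap_filling S) i j = box S (swap12 i j).1 (swap12 i j).2.
Proof.
rewrite /box swap12_le; case: ifP => // /andP[i_le j_le].
by rewrite ffunE /swap_box /= !inordK ?ltnS.
Qed.

Lemma card_swap_filling S (c : cell) :
  #|[pred b | swap_filling S b == c]| = #|[pred b | S b == c]|.
Proof.
rewrite -!sum1_card [RHS](reindex_inj (inv_inj swap_boxK)).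
by apply: eq_bigl => b; rewrite !inE ffunE.
Qed.

Lemma wt_swap_filling (R : pzRingType) (a b : R) S :
  wt a b (swap_filling S) = wt a b S.
Proof. by rewrite /wt /N_alpha /N_beta !card_swap_filling. Qed.

Definition swap_fun (f : nat -> nat -> cell) (i j : nat) : cell :=
  f (swap12 i j).1 (swap12 i j).2.

(* Closes a case of the alpha/beta rules for [swap_fun f]: the boxes involved
   are either ones where the value of [f] is known, or related by a rule of [f]. *)
Ltac swap_rule_case :=
  first
  [ lia
  | match goal with
    | F : forall i j, _ -> ?f i j = _ |- ?f _ _ = None => by apply: F; lia
    | F : forall i j, _ -> ?f i j = _, H : ?f _ _ = _ |- _ =>
        by rewrite F in H; [|lia]
    | A : forall i j i' j', ?f i j = _ -> _, H : ?f _ _ = _ |- ?f _ _ = None =>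
        by apply: (A _ _ _ _ H); lia
    end ].

(* [x = false] is the configuration of the first event, [x = true] that of the
   second. *)
Lemma is_tableau_swap f x : is_tableau n f ->
  f (n - 1) 1 = None -> f n 1 = Some x -> f (n - 1) 2 = Some (~~ x) ->
  is_tableau n (swap_fun f).
Proof.
move=> tab_f f_n1_1 f_n_1 f_n1_2.
have above := tableau_above_alpha tab_f; have left := tableau_left_of_beta tab_f.
have alpha_corner : f (n - ~~ x) (~~ x).+1 = c_alpha.
  by case: x f_n_1 f_n1_2 => /= [fa _|_ fa]; rewrite ?subn0.
have empty i j : i = 0 \/ j = 0 \/ n.+1 < i + j \/ i = n - 1 /\ j = 1 \/
    i < n - ~~ x /\ j = (~~ x).+1 -> f i j = None.
  move=> region.
  have [/(tableau_outside tab_f) //|[[-> ->] //|[lt_i ->]]] :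
    (i = 0 \/ j = 0 \/ n.+1 < i + j) \/ (i = n - 1 /\ j = 1) \/
    (i < n - ~~ x /\ j = (~~ x).+1) by lia.
  exact: above alpha_corner lt_i _.
have corner_n_1 i j : i = n /\ j = 1 -> f i j = Some x by case=> -> ->.
have corner_n1_2 i j : i = n - 1 /\ j = 2 -> f i j = Some (~~ x) by case=> -> ->.
case: tab_f => out _ _ diag; split.
- by move=> i j; rewrite /swap_fun -swap12_in_staircase; apply: out.
- move=> i j i' H lt; move: H; rewrite /swap_fun; swap12_cases; move=> H;
    case: x {f_n_1 f_n1_2 alpha_corner} empty corner_n_1 corner_n1_2 => /= *;
    swap_rule_case.
- move=> i j j' H lt; move: H; rewrite /swap_fun; swap12_cases; move=> H;
    case: x {f_n_1 f_n1_2 alpha_corner} empty corner_n_1 corner_n1_2 => /= *;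
    swap_rule_case.
- move=> i j ij_in ij_diag; apply: diag; first by rewrite swap12_in_staircase.
  by apply/eqP; rewrite swap12_diag ij_diag.
Qed.

Lemma ab_staircase_swap_filling S :
  box S n 1 = c_beta -> box S (n - 1) 2 = c_alpha ->
  (ab_staircase S && (box S (n - 1) 1 == None)) = ab_staircase (swap_filling S).
Proof.
move=> S_n_1 S_n1_2; apply/idP/idP.
- case/andP=> /ab_staircase_box tab_S /eqP S_n1_1; apply/ab_staircase_box.
  apply: eq_is_tableau (is_tableau_swap tab_S S_n1_1 S_n_1 S_n1_2) => i j.
  by rewrite box_swap_filling.
- move=> /ab_staircase_box tab_T.
  have T_n1_2 : box (swap_filling S) (n - 1) 2 = c_beta.
    by rewrite box_swap_filling swap12_n1_2.
  have T_n_1 : box (swap_filling S) n 1 = c_alpha.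
    by rewrite box_swap_filling swap12_n_1.
  have T_n1_1 : box (swap_filling S) (n - 1) 1 = None.
    by apply: (tableau_left_of_beta tab_T T_n1_2).
  apply/andP; split; last by rewrite -T_n1_1 box_swap_filling swap12_n1_1.
  apply/ab_staircase_box.
  apply: eq_is_tableau (is_tableau_swap tab_T T_n1_1 T_n_1 T_n1_2) => i j.
  by rewrite /swap_fun box_swap_filling swap12K.
Qed.

Lemma ev_all_x_swap_filling js S :
  all (leq 3) js -> ev_all_x n js (swap_filling S) = ev_all_x n js S.
Proof.
move=> js_ge3; apply: eq_in_all => j /(allP js_ge3) j_ge3.
by rewrite /ev_x box_swap_filling swap12_id //; apply/eqP; lia.
Qed.

Lemma corner_events_not_alpha (S : filling n) : ab_staircase S ->
  [&& box S (n - 1) 1 == None, box S n 1 == c_beta & box S (n - 1) 2 != c_alpha]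
  = (box S (n - 1) 2 == c_beta) && (box S n 1 != c_alpha).
Proof.
move=> /ab_staircase_box tab_S.
have S_n1_2 : box S (n - 1) 2 <> None by apply: (tableau_diag tab_S); lia.
have S_n_1 : box S n 1 <> None by apply: (tableau_diag tab_S); lia.
case E: (box S (n - 1) 2) S_n1_2 => [[]|] // _; case: (box S n 1) S_n_1 => [[]|] // _;
  rewrite /= ?andbF ?andbT //.
by rewrite (tableau_left_of_beta tab_S E).
Qed.

End ColumnSwap.

Local Open Scope ring_scope.

Theorem lemma4p4 (R : realFieldType) (a b : R) (n : nat) (js : seq nat) :
  0 < a -> 0 < b -> (4 <= n)%N ->
  sorted ltn js -> all (fun j => (3 <= j <= n - 2)%N) js ->
  Prob a b (fun S => [&& ev_all_x n js S, ev_empty n (n - 1) 1 S & ev_beta n n 1 S])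
  = Prob a b (fun S => ev_all_x n js S && ev_beta n (n - 1) 2 S).
Proof.
move=> _ _ n_ge4 _ js_range.
have n_ge2 : (2 <= n)%N by lia.
have js_ge3 : all (leq 3) js by apply: sub_all js_range => j /andP[].
rewrite /Prob; congr (_ / _).
rewrite (bigID (fun S => box S (n - 1) 2 == c_alpha)) /=.
rewrite [RHS](bigID (fun S => box S n 1 == c_alpha)) /=.
congr (_ + _).
- rewrite [RHS](reindex_inj (inv_inj (swap_fillingK n_ge2))).
  apply: eq_big => [S | S _]; last by rewrite wt_swap_filling.
  rewrite /ev_empty /ev_beta !box_swap_filling // swap12_n1_2 // swap12_n_1 //.
  rewrite ev_all_x_swap_filling //.
  have [S_n_1|] := eqVneq (box S n 1) c_beta; last by rewrite !andbF.
  have [S_n1_2|] := eqVneq (box S (n - 1) 2) c_alpha; last by rewrite !andbF.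
  rewrite -ab_staircase_swap_filling //.
  by rewrite !andbT andbAC andbA.
- apply: eq_bigl => S; rewrite /ev_empty /ev_beta.
  case tab_S: (ab_staircase S) => //=.
  by case: (ev_all_x n js S) => //=; rewrite -andbA corner_events_not_alpha.
Qed.
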